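(* For every positive integer $n$ there exist $n$ Boolean attributes $A_1,\ldots,A_n$, a binary boosted tree $BT=\{F\}$ consisting of a single forest $F$ over them, and an instance $\vec x\in\vec X$ such that the unique tree-specific explanation for $\vec x$ given $BT$ is $t_{\vec x}$ itself, while $\emptyset$ is the unique sufficient reason for $\vec x$ given $BT$.
   Context: With Boolean attributes $A_1,\ldots,A_n$ (domain $\{0,1\}$), an instance is $\vec x=(v_1,\ldots,v_n)\in\{0,1\}^n$; $\vec X$ is the set of all instances; $t_{\vec x}=\{(A_i=v_i):i\in[n]\}$. An instance $\vec x'$ extends $t$ if $t\subseteq t_{\vec x'}$. A regression tree is a finite binary tree whose internal nodes are labelled by conditions $A_i=1$ and whose leaves are labelled by real numbers; $w(T,\vec x)$ is the label of the leaf reached by following, from the root, the branch determined by whether $\vec x$ satisfies each node's condition. For $t\subseteq t_{\vec x}$: $w_\downarrow(t,T)=\min\{w(T,\vec x'):\vec x'\text{ extends }t\}$, $w_\uparrow(t,T)=\max\{w(T,\vec x'):\vec x'\text{ extends }t\}$. A forest $F=\{T_1,\ldots,T_p\}$ has $w(F,\vec x)=\sum_k w(T_k,\vec x)$; for $BT=\{F\}$, $BT(\vec x)=1$ if $w(F,\vec x)>0$ and $0$ otherwise. An abductive explanation for $\vec x$ given $BT$ is $t\subseteq t_{\vec x}$ such that every $\vec x'$ extending $t$ has $BT(\vec x')=BT(\vec x)$; a sufficient reason is a subset-minimal abductive explanation. A tree-specific explanation for $\vec x$ given $BT$: if $BT(\vec x)=1$, a $t\subseteq t_{\vec x}$ with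 $\sum_k w_\downarrow(t,T_k)>0$ such that no proper subset of $t$ satisfies this; if $BT(\vec x)=0$, a $t\subseteq t_{\vec x}$ with $\sum_k w_\uparrow(t,T_k)\le 0$ such that no proper subset of $t$ satisfies this. *)

From HB Require Import structures.
From mathcomp Require Import all_boot all_order all_algebra.
From mathcomp Require Import reals.
Set Implicit Arguments. Unset Strict Implicit. Unset Printing Implicit Defensive.
Import Order.TTheory GRing.Theory Num.Theory.
Local Open Scope ring_scope.

Section BT.
Variables (R : realType) (n : nat).

Definition instance := {ffun 'I_n -> bool}.

(* A term t ⊆ t_x is determined by the set S of attributes it fixes:
   t = {(A_i = x_i) : i ∈ S}. *)
Definition extends (S : {set 'I_n}) (x x' : instance) : bool :=
  [forall i in S, x' i == x i].

(* Regression trees: internal nodes test A_i = 1; leaves carry reals.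
   [Node i t1 t0] goes to t1 if the condition holds, to t0 otherwise. *)
Inductive rtree :=
| Leaf of R
| Node of 'I_n & rtree & rtree.

Fixpoint wT (T : rtree) (x : instance) : R :=
  match T with
  | Leaf r => r
  | Node i t1 t0 => if x i then wT t1 x else wT t0 x
  end.

(* min / max of w(T, x') over the instances x' extending t (x itself extends t). *)
Definition w_down (T : rtree) (x : instance) (S : {set 'I_n}) : R :=
  \big[Order.min/wT T x]_(x' : instance | extends S x x') wT T x'.
Definition w_up (T : rtree) (x : instance) (S : {set 'I_n}) : R :=
  \big[Order.max/wT T x]_(x' : instance | extends S x x') wT T x'.

Definition forest := seq rtree.
Definition wF (F : forest) (x : instance) : R := \sum_(T <- F) wT T x.
Definition BT (F : forest) (x : instance) : bool := 0 < wF F x.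

Definition abductive (F : forest) (x : instance) (S : {set 'I_n}) : Prop :=
  forall x', extends S x x' -> BT F x' = BT F x.

Definition sufficient_reason (F : forest) (x : instance) (S : {set 'I_n}) : Prop :=
  abductive F x S /\ forall S' : {set 'I_n}, S' \proper S -> ~ abductive F x S'.

Definition ts_cond (F : forest) (x : instance) (S : {set 'I_n}) : Prop :=
  if BT F x then 0 < \sum_(T <- F) w_down T x S
  else \sum_(T <- F) w_up T x S <= 0.

Definition tree_specific (F : forest) (x : instance) (S : {set 'I_n}) : Prop :=
  ts_cond F x S /\ forall S' : {set 'I_n}, S' \proper S -> ~ ts_cond F x S'.

End BT.

(** The forest pairs, for every attribute A_i, the stump "A_i ? 0 : 1" with the
    stump "A_i ? 0 : -1".  The two cancel on every instance, so the forest
    classifies everything as 0 and the empty term is already abductive: it is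
    the only sufficient reason.  At the all-ones instance, however, the
    worst-case score w_up of the first stump is 1 as soon as A_i is left free,
    while that of the second one is always 0; so the sum of the w_up's is the
    number of free attributes, and it is <= 0 only for the full term t_x. *)

From HB Require Import structures.
From mathcomp Require Import all_boot all_order all_algebra.
From mathcomp Require Import reals.
Set Implicit Arguments. Unset Strict Implicit. Unset Printing Implicit Defensive.
Import Order.TTheory GRing.Theory Num.Theory.
Local Open Scope ring_scope.

Section Explanations.
Variables (R : realType) (n : nat).
Implicit Types (T : rtree R n) (F : forest R n) (x : instance n) (S : {set 'I_n}).

Lemma sufficient_reason_const F x :
  (forall x', BT F x' = BT F x) ->
  forall S, sufficient_reason F x S <-> S = set0.
Proof.
move=> BT_const S; have abd S' : abductive F x S' by move=> x' _; exact: BT_const.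
split=> [[_ minS] | ->].
  by have [// | S_neq0] := eqVneq S set0; case: (minS set0); rewrite ?proper0.
by split=> // S'; rewrite properE subset0 => /andP[/eqP -> ]; rewrite sub0set.
Qed.

Lemma tree_specific_unique F x S0 :
  (forall S, ts_cond F x S <-> S = S0) ->
  forall S, tree_specific F x S <-> S = S0.
Proof.
move=> tsE S; split=> [[/tsE] // | ->].
by split=> [|S' ltS'S0 /tsE eqS'S0]; [exact/tsE | rewrite eqS'S0 properxx in ltS'S0].
Qed.

Lemma extends_refl S x : extends S x x.
Proof. by apply/forall_inP. Qed.

Lemma le_w_up T S x x' : extends S x x' -> wT T x' <= w_up T x S.
Proof. exact: le_bigmax_cond. Qed.

Lemma w_up_le T S x c :
  (forall x', extends S x x' -> wT T x' <= c) -> w_up T x S <= c.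
Proof. by move=> le_c; apply/bigmax_leP; split; [exact/le_c/extends_refl|]. Qed.

Definition set_attr x (i : 'I_n) (v : bool) : instance n :=
  [ffun j => if j == i then v else x j].

Lemma extends_set_attr S x i v : i \notin S -> extends S x (set_attr x i v).
Proof.
move=> iNS; apply/forall_inP => j jS; rewrite ffunE.
by case: (eqVneq j i) jS => [-> | _ _]; rewrite ?(negbTE iNS).
Qed.

Definition stump (i : 'I_n) (a b : R) : rtree R n := Node i (Leaf n a) (Leaf n b).

Lemma w_up_stump i a b S x :
  w_up (stump i a b) x S =
    if i \in S then wT (stump i a b) x else Num.max a b.
Proof.
case: ifPn => [iS | iNS].
  apply/le_anti; rewrite le_w_up ?extends_refl // andbT.
  by apply: w_up_le => x' /forall_inP/(_ i iS)/eqP /= ->.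
apply/le_anti/andP; split.
  by apply: w_up_le => x' _ /=; case: (x' i); rewrite le_max lexx ?orbT.
have wT_set_attr v : wT (stump i a b) (set_attr x i v) = if v then a else b.
  by rewrite /= ffunE eqxx.
rewrite ge_max; apply/andP; split.
  by have := le_w_up (stump i a b) (extends_set_attr x true iNS); rewrite wT_set_attr.
by have := le_w_up (stump i a b) (extends_set_attr x false iNS); rewrite wT_set_attr.
Qed.

Definition ones : instance n := [ffun => true].

Definition balanced_stumps : forest R n :=
  [seq stump i 0 1 | i <- enum 'I_n] ++ [seq stump i 0 (-1) | i <- enum 'I_n].

Lemma wF_balanced_stumps x : wF balanced_stumps x = 0.
Proof.
rewrite /wF big_cat /= !big_map -big_split /= big1 // => i _.
by case: (x i); rewrite ?addr0 ?subrr.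
Qed.

Lemma BT_balanced_stumps x : BT balanced_stumps x = false.
Proof. by rewrite /BT wF_balanced_stumps ltxx. Qed.

Lemma sum_w_up_balanced_stumps S :
  \sum_(T <- balanced_stumps) w_up T ones S = #|~: S|%:R.
Proof.
rewrite big_cat /= !big_map [X in _ + X]big1 => [|i _]; last first.
  by rewrite w_up_stump /= ffunE; case: ifP => // _; rewrite max_l ?lerN10.
rewrite addr0 -sumr_const [RHS]big_mkcond; apply: eq_bigr => i _.
by rewrite w_up_stump /= ffunE inE; case: ifP => // _; rewrite max_r ?ler01.
Qed.

Lemma ts_cond_balanced_stumps S :
  ts_cond balanced_stumps ones S <-> S = setT.
Proof.
rewrite /ts_cond BT_balanced_stumps sum_w_up_balanced_stumps.
by rewrite lern0 cards_eq0 -setCT (inj_eq (@setC_inj _)); split=> /eqP.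
Qed.

End Explanations.

Theorem proposition5 (R : realType) (n : nat) : (0 < n)%N ->
  exists (F : forest R n) (x : instance n),
    (forall S : {set 'I_n}, tree_specific F x S <-> S = setT) /\
    (forall S : {set 'I_n}, sufficient_reason F x S <-> S = set0).
Proof.
(* The construction does not need 0 < n: for n = 0, t_x is itself empty. *)
move=> _; exists (balanced_stumps R n), (ones n); split.
  exact/tree_specific_unique/ts_cond_balanced_stumps.
by apply: sufficient_reason_const => x'; rewrite !BT_balanced_stumps.
Qed.
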